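(* Let $P$ be a convex euclidean $p$-gon, and let $G$ be the group of isometries of $\mathbb R^2$ generated by the point reflections $T_1,\dots,T_p$ in the vertices of $P$, with generating set $S=\{T_1,\dots,T_p\}$. Then $|G_S^{(n)}|\prec n^{p-1}$.
   Context: $G_S^{(n)}$ denotes the set of elements of $G$ expressible as products of at most $n$ elements of $S\cup S^{-1}$. $g\prec h$ means $g(n)\le Ch(n)$ for some constant $C$ and all sufficiently large $n$. *)

From HB Require Import structures.
From mathcomp Require Import all_boot all_order all_algebra.
From mathcomp Require Import boolp classical_sets functions cardinality reals.
Set Implicit Arguments. Unset Strict Implicit. Unset Printing Implicit Defensive.
Import Order.TTheory GRing.Theory Num.Theory.
Local Open Scope ring_scope.

Definition orient (R : realType) (a b c : R * R) : R :=
  (b.1 - a.1) * (c.2 - a.2) - (b.2 - a.2) * (c.1 - a.1).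

(* v : 'I_p -> R * R lists, in cyclic order, the vertices of a convex
   euclidean p-gon: p >= 3 and, for every edge [v i, v (i+1)], all the
   other vertices lie strictly on the same side of the edge line, with a
   common orientation (all counterclockwise or all clockwise). *)
Definition convex_polygon (R : realType) (p : nat) (v : 'I_p -> R * R) : Prop :=
  (3 <= p)%N /\
  ((forall i j : 'I_p, j != i -> j != ordS i -> 0 < orient (v i) (v (ordS i)) (v j)) \/
   (forall i j : 'I_p, j != i -> j != ordS i -> orient (v i) (v (ordS i)) (v j) < 0)).

Definition point_reflection (R : realType) (c : R * R) : R * R -> R * R :=
  fun x => (2 * c.1 - x.1, 2 * c.2 - x.2).

Definition word_eval (R : realType) (p : nat) (v : 'I_p -> R * R) (w : seq 'I_p)
  : R * R -> R * R :=
  foldr (fun i f => point_reflection (v i) \o f) id w.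

(* G_S^(n): elements of G that are products of at most n elements of
   S u S^-1, where S = {T_1,...,T_p}.  Since each T_i is an involution,
   S^-1 = S, so words over S suffice. *)
Definition ball_S (R : realType) (p : nat) (v : 'I_p -> R * R) (n : nat)
  : set (R * R -> R * R) :=
  [set f | exists w : seq 'I_p, (size w <= n)%N /\ f = word_eval v w].

From mathcomp Require Import all_boot all_order all_algebra.
From mathcomp Require Import boolp classical_sets cardinality reals.
From mathcomp Require Import zify.

Set Implicit Arguments.
Unset Strict Implicit.
Unset Printing Implicit Defensive.
Import Order.TTheory GRing.Theory Num.Theory.
Local Open Scope ring_scope.
Local Open Scope classical_set_scope.
Local Open Scope card_scope.

(* In the ring R * R a point reflection is x |-> 2 c - x, so a word
   w = i_1 ... i_k evaluates to x |-> (-1)^k x + 2 \sum_i c_i v_i, where c_i is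
   the alternating count of the occurrences of i in w.  Thus |c_i| <= k and
   \sum_i c_i = k mod 2, so the isometry is determined by the parity of k and
   by c_1, ..., c_(p-1) in [-n, n]: there are at most 2 (2n+1)^(p-1) elements
   of length at most n. *)

Lemma card_image_finType_le (K : finType) (U : Type) (f : K -> U) :
  f @` [set: K] #<= `I_#|K|.
Proof.
rewrite (card_le_eqr card_II).
have -> : f @` [set: K] = (f \o enum_val) @` [set: 'I_#|K|].
  apply/seteqP; split=> [_ [x _ <-]|_ [i _ <-]]; last by exists (enum_val i).
  by exists (enum_rank x) => //=; rewrite enum_rankK.
exact: card_image_le.
Qed.

Lemma sum_mulrz_lift0 (V : zmodType) (n : nat) (x : 'I_n.+1 -> V)
    (c : 'I_n.+1 -> int) :
  \sum_i x i *~ c i = x ord0 *~ (\sum_i c i)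
    + \sum_(j < n) (x (lift ord0 j) - x ord0) *~ c (lift ord0 j).
Proof.
rewrite !big_ord_recl mulrzDr mulrz_sumr -addrA -big_split /=.
by congr (_ + _); apply: eq_bigr => j _; rewrite mulrzBl addrC subrK.
Qed.

Lemma sum_mulrz_eq_idx (V : zmodType) (p : nat) (x : 'I_p -> V) (k : 'I_p) :
  \sum_i x i *~ (k == i) = x k.
Proof.
by rewrite (bigD1 k) //= eqxx big1 ?addr0 // => i /negbTE; rewrite eq_sym => ->.
Qed.

Lemma inord_shiftK (n : nat) (z : int) : `|z| <= n%:Z ->
  ((inord (absz (z + n%:Z)) : 'I_(n.*2).+1) : nat)%:Z - n%:Z = z.
Proof. by move=> z_le; rewrite inordK; lia. Qed.

Section WordCoefficients.

Variable p : nat.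
Implicit Types (w : seq 'I_p) (i : 'I_p).

Definition word_coef w i : int := foldr (fun k c => (k == i)%:Z - c) 0 w.

Lemma sum_word_coef w : \sum_i word_coef w i = odd (size w).
Proof.
elim: w => [|k w IHw] /=; first by rewrite big1.
rewrite sumrB IHw (bigD1 k) //= eqxx big1 => [|i /negbTE]; last first.
  by rewrite eq_sym => ->.
by case: (odd (size w)).
Qed.

Lemma abs_word_coef_le w i : `|word_coef w i| <= size w.
Proof.
elim: w => [|k w IHw] /=; first by rewrite normr0.
by apply: le_trans (ler_normB _ _) _; rewrite intS lerD //; case: eqP.
Qed.

End WordCoefficients.

Section ReflectionWords.

Variable R : realType.

Lemma point_reflectionE (c x : R * R) : point_reflection c x = 2 * c - x.
Proof. by []. Qed.

Lemma word_evalE (p : nat) (v : 'I_p -> R * R) (w : seq 'I_p) (x : R * R) :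
  word_eval v w x = (-1) ^+ size w * x + 2 * \sum_i v i *~ word_coef w i.
Proof.
elim: w => [|k w IHw] /=; first by rewrite big1 ?mul1r ?mulr0 ?addr0.
under eq_bigr => i _ do rewrite mulrzBr.
rewrite sumrB sum_mulrz_eq_idx point_reflectionE IHw.
by rewrite exprS mulN1r mulNr mulrBr opprD addrCA.
Qed.

End ReflectionWords.

Section BallCount.

Variables (R : realType) (p : nat) (v : 'I_p.+1 -> R * R).

Local Notation code n := (bool * {ffun 'I_p -> 'I_(n.*2).+1})%type.

Definition word_code (n : nat) (w : seq 'I_p.+1) : code n :=
  (odd (size w), [ffun j => inord (absz (word_coef w (lift ord0 j) + n%:Z))]).

Definition isometry_of_code (n : nat) (k : code n) : R * R -> R * R :=
  fun x => (-1) ^+ k.1 * x + 2 * (v ord0 *~ k.1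
    + \sum_j (v (lift ord0 j) - v ord0) *~ ((k.2 j : nat)%:Z - n%:Z)).

Lemma word_eval_code (n : nat) (w : seq 'I_p.+1) : (size w <= n)%N ->
  word_eval v w = isometry_of_code (word_code n w).
Proof.
move=> w_le; apply: funext => x.
rewrite word_evalE sum_mulrz_lift0 sum_word_coef -signr_odd /=.
congr (_ + 2 * (_ + _)); apply: eq_bigr => j _.
by rewrite ffunE inord_shiftK // (le_trans (abs_word_coef_le _ _)) ?lez_nat.
Qed.

Lemma card_ball_S_le (n : nat) : ball_S v n #<= `I_(2 * (n.*2).+1 ^ p).
Proof.
have ball_sub : ball_S v n `<=` @isometry_of_code n @` [set: code n].
  move=> _ [w [w_le ->]].
  by exists (word_code n w); rewrite // (word_eval_code w_le).
apply: card_le_trans (subset_card_le ball_sub) _.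
apply: card_le_trans (card_image_finType_le _) _.
by rewrite card_le_II card_prod card_bool card_ffun !card_ord.
Qed.

End BallCount.

Theorem mainTheorem16 (R : realType) (p : nat) (v : 'I_p -> R * R) :
  convex_polygon v ->
  exists C N : nat, forall n : nat, (N <= n)%N ->
    ball_S v n #<= `I_(C * n ^ (p - 1))%N.
Proof.
case: p v => [|p] v [p_ge3 _] //.
exists (2 * 3 ^ p)%N, 1%N => n n_gt0.
apply: card_le_trans (card_ball_S_le v n) _.
rewrite card_le_II subn1 -mulnA leq_mul2l -expnMn /=.
by case: p {v p_ge3} => // p; rewrite leq_exp2r //; lia.
Qed.
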